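(* If a configuration $(\mu,s)$ is stable under no observability for the objective game $G$, then its aggregate outcome $x(\mu,s)$ is a Nash equilibrium of $G$.
   Context: Objective game: $G=(N,A,\pi)$ is a finite $n$-player normal-form game, $N=\{1,\dots,n\}$, finite action sets $A_i$, $A=\prod_iA_i$, fitness functions $\pi_i:A\to\mathbb{R}$ extended multilinearly to $\prod_i\Delta(A_i)$. Preference types: $\Theta=\mathbb{R}^A$ (extended multilinearly). $\mathcal{M}(\Theta^n)$: product distributions $\mu=\mu_1\times\dots\times\mu_n$ on $\Theta^n$ with finitely supported marginals; $\operatorname{supp}\mu=\prod_i\operatorname{supp}\mu_i$, $\mu_{-i}(\theta_{-i})=\prod_{j\neq i}\mu_j(\theta_j)$. Mutants: for nonempty $J\subseteq N$, a mutant sub-profile is $\tilde\theta_J\in\prod_{j\in J}(\Theta\setminus\operatorname{supp}\mu_j)$ with shares $\varepsilon\in(0,1)^{|J|}$, $\|\varepsilon\|=\max_j\varepsilon_j$; post-entry $\tilde\mu^\varepsilon_i=(1-\varepsilon_i)\mu_i+\varepsilon_i\delta_{\tilde\theta_i}$ for $i\in J$, $\tilde\mu^\varepsilon_i=\mu_i$ otherwise. No observability: a strategy of player $i$ is $s_i:\operatorname{supp}\mu_i\to\Delta(A_i)$, $s(\theta)=(s_1(\theta_1),\dots,s_n(\theta_n))$; $s$ is a Bayesian–Nash equilibrium if for each $i$ and $\theta_i\in\operatorname{supp}\mu_i$, $s_i(\theta_i)\in\arg\max_{\sigma_i\in\Delta(A_i)}\sum_{\theta'_{-i}\in\operatorname{supp}\mu_{-i}}\mu_{-i}(\theta'_{-i})\theta_i(\sigma_i,s_{-i}(\theta'_{-i}))$;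 $B_0(\mu)$ is the set of these; $(\mu,s)$ with $s\in B_0(\mu)$ is a configuration, with aggregate outcome $x(\mu,s)=\big(\sum_{\theta_i}\mu_i(\theta_i)s_i(\theta_i)\big)_{i}$. Average fitness: $\Pi_{\theta_i}(\mu;s)=\pi_i(s_i(\theta_i),x(\mu,s)_{-i})$. Balanced: all types in each $\operatorname{supp}\mu_i$ have equal average fitness. Nearby set: for $\eta\ge0$, $B_0^\eta(\tilde\mu^\varepsilon;s)=\{\tilde s\in B_0(\tilde\mu^\varepsilon):\max_{i}\|\tilde s_i(\theta_i)-s_i(\theta_i)\|\le\eta\ \forall\theta\in\operatorname{supp}\mu\}$ (Euclidean norm). $(\mu,s)$ is stable if it is balanced and for every nonempty $J\subseteq N$, every $\tilde\theta_J$ and every $\eta>0$ there exist $\bar\eta\in[0,\eta)$ and $\bar\epsilon\in(0,1)$ such that for every $\varepsilon$ with $\|\varepsilon\|\in(0,\bar\epsilon)$, $B_0^{\bar\eta}(\tilde\mu^\varepsilon;s)\neq\emptyset$ and every $\tilde s\in B_0^{\bar\eta}(\tilde\mu^\varepsilon;s)$ satisfies either (i) some $j\in J$ has $\Pi_{\theta_j}(\tilde\mu^\varepsilon;\tilde s)>\Pi_{\tilde\theta_j}(\tilde\mu^\varepsilon;\tilde s)$ for all $\theta_j\in\operatorname{supp}\mu_j$, or (ii) for every $i$ all types in $\operatorname{supp}\tilde\mu^\varepsilon_i$ have equal average fitness under $(\tilde\mu^\varepsilon,\tilde s)$. *)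

(* Reals are modelled by an arbitrary real closed field
   R : rcfType (ordered field with square roots, needed for the Euclidean norm). *)
From HB Require Import structures.
From mathcomp Require Import all_boot all_order all_algebra.
Unset Printing Implicit Defensive.
Import Order.TTheory GRing.Theory Num.Theory.
Local Open Scope ring_scope.

Section Game.
Variables (R : rcfType) (n : nat) (A : 'I_n -> finType).

Definition prof := {dffun forall i : 'I_n, A i}.
(* preference types Theta = R^A *)
Definition Theta := {ffun prof -> R}.
Definition mprof := forall i : 'I_n, A i -> R.

Definition mixed (i : 'I_n) (sigma : A i -> R) : Prop :=
  (forall a, 0 <= sigma a) /\ \sum_(a : A i) sigma a = 1.

Definition ext (u : prof -> R) (sigma : mprof) : R :=
  \sum_(a : prof) (\prod_(j < n) sigma j (a j)) * u a.

Definition ext_dev (u : prof -> R) (i : 'I_n) (si : A i -> R) (sigma : mprof) : R :=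
  \sum_(a : prof) (si (a i) * \prod_(j < n | j != i) sigma j (a j)) * u a.

Definition nash (pi : 'I_n -> prof -> R) (x : mprof) : Prop :=
  (forall i, mixed i (x i)) /\
  forall i (si : A i -> R), mixed i si -> ext_dev (pi i) i si x <= ext (pi i) x.

(* A finitely supported distribution on Theta: its support (a duplicate-free
   list) together with the (positive) weights on the support. *)
Definition dist := (seq Theta * (Theta -> R))%type.
Definition is_dist (d : dist) : Prop :=
  uniq d.1 /\ (forall th, th \in d.1 -> 0 < d.2 th) /\ \sum_(th <- d.1) d.2 th = 1.

(* product distribution mu = mu_1 x ... x mu_n, given by its marginals *)
Definition pop := 'I_n -> dist.
Definition is_pop (mu : pop) : Prop := forall i, is_dist (mu i).

(* strategies s_i : supp mu_i -> Delta(A_i) (only values on supports matter) *)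
Definition strat := forall i : 'I_n, Theta -> A i -> R.

Definition theta0 : Theta := [ffun => 0].

(* enumeration of the type profiles whose coordinates j in P range over supp mu_j *)
Definition prof_list (mu : pop) (P : seq 'I_n) : seq ('I_n -> Theta) :=
  foldr (fun j acc =>
           [seq (fun k => if k == j then th else t k) | th <- (mu j).1, t <- acc])
        [:: fun _ => theta0] P.

Definition profiles_except (mu : pop) (i : 'I_n) : seq ('I_n -> Theta) :=
  prof_list mu [seq j <- enum 'I_n | j != i].

Definition EU (mu : pop) (s : strat) (i : 'I_n) (th : Theta) (si : A i -> R) : R :=
  \sum_(t <- profiles_except mu i)
     (\prod_(j < n | j != i) (mu j).2 (t j)) *
     ext_dev th i si (fun j : 'I_n => s j (t j)).

Definition BNE (mu : pop) (s : strat) : Prop :=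
  forall i th, th \in (mu i).1 ->
    mixed i (s i th) /\
    forall si : A i -> R, mixed i si -> EU mu s i th si <= EU mu s i th (s i th).

Definition agg (mu : pop) (s : strat) : mprof :=
  fun i a => \sum_(th <- (mu i).1) (mu i).2 th * s i th a.

Definition fitness (pi : 'I_n -> prof -> R) (mu : pop) (s : strat)
  (i : 'I_n) (th : Theta) : R :=
  ext_dev (pi i) i (s i th) (agg mu s).

Definition balanced (pi : 'I_n -> prof -> R) (mu : pop) (s : strat) : Prop :=
  forall i th th', th \in (mu i).1 -> th' \in (mu i).1 ->
    fitness pi mu s i th = fitness pi mu s i th'.

Definition enorm (i : 'I_n) (v : A i -> R) : R := Num.sqrt (\sum_(a : A i) v a ^+ 2).

Definition entry (d : dist) (tht : Theta) (e : R) : dist :=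
  (tht :: d.1, fun th => if th == tht then e else (1 - e) * d.2 th).

Definition postentry (mu : pop) (J : {set 'I_n}) (tht : 'I_n -> Theta)
  (eps : 'I_n -> R) : pop :=
  fun i => if i \in J then entry (mu i) (tht i) (eps i) else mu i.

Definition epsnorm (J : {set 'I_n}) (eps : 'I_n -> R) : R :=
  \big[Num.max/0]_(j in J) eps j.

Definition nearby (mut mu : pop) (s : strat) (eta : R) (st : strat) : Prop :=
  BNE mut st /\
  forall t : 'I_n -> Theta, (forall j, t j \in (mu j).1) ->
    forall i, enorm i (fun a => st i (t i) a - s i (t i) a) <= eta.

Definition stable (pi : 'I_n -> prof -> R) (mu : pop) (s : strat) : Prop :=
  balanced pi mu s /\
  forall J : {set 'I_n}, J != set0 ->
  forall tht : 'I_n -> Theta, (forall j, j \in J -> tht j \notin (mu j).1) ->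
  forall eta : R, 0 < eta ->
  exists etab epsb : R,
    0 <= etab < eta /\ 0 < epsb < 1 /\
    forall eps : 'I_n -> R, (forall j, j \in J -> 0 < eps j < 1) ->
      0 < epsnorm J eps < epsb ->
      (exists st, nearby (postentry mu J tht eps) mu s etab st) /\
      forall st, nearby (postentry mu J tht eps) mu s etab st ->
        (exists2 j, j \in J &
           forall th, th \in (mu j).1 ->
             fitness pi (postentry mu J tht eps) st j (tht j)
               < fitness pi (postentry mu J tht eps) st j th)
        \/ balanced pi (postentry mu J tht eps) st.

End Game.

Arguments prof {n} A.
Arguments Theta R {n} A.
Arguments mprof R {n} A.
Arguments pop R {n} A.
Arguments strat R {n} A.
Arguments is_pop {R n A} mu.
Arguments BNE {R n A} mu s.
Arguments agg {R n A} mu s _ _.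
Arguments stable {R n A} pi mu s.
Arguments nash {R n A} pi x.

From HB Require Import structures.
From mathcomp Require Import all_boot all_order all_algebra.
From mathcomp Require Import ring lra.
Set Implicit Arguments.
Unset Strict Implicit.
Import Order.TTheory GRing.Theory Num.Theory.
Local Open Scope ring_scope.

(* Suppose the aggregate outcome x = x(mu, s) is not a Nash equilibrium: some player i has
   a pure action b whose payoff g(b) against x_{-i} exceeds the payoff v of x_i.  Let a
   fresh "dominant type" for b enter player i's population; its utility is c + [a_i = b],
   so in every Bayesian-Nash equilibrium it plays b.  Stability provides nearby
   post-entry equilibria st, whose incumbent strategies, hence aggregate play, differ from s
   by an arbitrarily small eta.  Pure-action payoffs are Lipschitz in the opponents'
   aggregate play, so the mutant earns about g(b) while the incumbents' mean fitness is
   about v < g(b).  The mutant is then neither strictly worse than every incumbent nor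
   equally fit as all of them, contradicting stability. *)

#[local] Arguments ext {R n A}.
#[local] Arguments ext_dev {R n A}.
#[local] Arguments mixed {R n A}.
#[local] Arguments EU {R n A}.
#[local] Arguments fitness {R n A}.
#[local] Arguments enorm {R n A}.
#[local] Arguments entry {R n A}.
#[local] Arguments postentry {R n A}.
#[local] Arguments epsnorm {R n}.
#[local] Arguments nearby {R n A}.
#[local] Arguments is_dist {R n A}.
#[local] Arguments balanced {R n A}.
#[local] Arguments prof_list {R n A}.
#[local] Arguments profiles_except {R n A}.
#[local] Arguments theta0 {R n A}.

Section RealSums.
Variable R : rcfType.

Lemma prob_coord_bounds (T : finType) (v : T -> R) (a : T) :
  (forall a, 0 <= v a) -> \sum_a v a = 1 -> 0 <= v a <= 1.
Proof. by move=> v0 v1; rewrite v0 /= -v1 (bigD1 a) //= lerDl sumr_ge0. Qed.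

Lemma prob_point_mass (T : finType) (v : T -> R) (b : T) :
  (forall a, 0 <= v a) -> \sum_a v a = 1 -> 1 <= v b -> forall a, v a = (a == b)%:R.
Proof.
move=> v0 v1 vb_ge1.
have vb : v b = 1.
  by apply/eqP; rewrite eq_le vb_ge1 andbT; case/andP: (prob_coord_bounds b v0 v1).
have rest : \sum_(a | a != b) v a = 0 by move: v1; rewrite (bigD1 b) //= vb; lra.
move=> a; case: (eqVneq a b) => [->|ab]; first by rewrite vb.
exact: (psumr_eq0P (fun a _ => v0 a) rest).
Qed.

Lemma mixture_gt_pure (T : finType) (si g : T -> R) (w : R) :
  (forall a, 0 <= si a) -> \sum_a si a = 1 -> w < \sum_a si a * g a -> exists b, w < g b.
Proof.
move=> si0 si1 w_lt; apply/existsP; apply: contraTT w_lt => /existsPn all_le.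
rewrite -leNgt -[w]mul1r -si1 mulr_suml; apply: ler_sum => a _.
by rewrite ler_wpM2l // leNgt all_le.
Qed.

Lemma expected_payoff_perturb (T : finType) (x m g g' : T -> R) (eta C D : R) :
  (forall a, 0 <= x a) -> \sum_a x a = 1 ->
  (forall a, `|m a - x a| <= eta) -> (forall a, `|g' a| <= C) ->
  (forall a, `|g a - g' a| <= D) ->
  \sum_a m a * g' a <= \sum_a x a * g a + #|T|%:R * (eta * C) + D.
Proof.
move=> x0 x1 dm g'C dg.
have -> : \sum_a m a * g' a =
    \sum_a (m a - x a) * g' a + \sum_a x a * (g' a - g a) + \sum_a x a * g a.
  by rewrite -!big_split; apply: eq_bigr => a _ /=; ring.
have strategy_change : \sum_a (m a - x a) * g' a <= #|T|%:R * (eta * C).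
  apply: le_trans (_ : \sum_(a : T) eta * C <= _); last by rewrite sumr_const mulr_natl.
  apply: ler_sum => a _; apply: le_trans (ler_norm _) _; rewrite normrM.
  by apply: ler_pM; rewrite ?normr_ge0.
have payoff_change : \sum_a x a * (g' a - g a) <= D.
  apply: le_trans (_ : \sum_a x a * D <= _); last by rewrite -mulr_suml x1 mul1r.
  apply: ler_sum => a _; rewrite ler_wpM2l //.
  by apply: le_trans (ler_norm _) _; rewrite distrC.
lra.
Qed.

Lemma prod_unit_lipschitz (I : Type) (r : seq I) (P : pred I) (x y : I -> R) :
  (forall j, P j -> 0 <= x j <= 1 /\ 0 <= y j <= 1) ->
  `|\prod_(j <- r | P j) x j - \prod_(j <- r | P j) y j| <= \sum_(j <- r | P j) `|x j - y j|.
Proof.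
move=> xy01; elim: r => [|j r IH]; first by rewrite !big_nil subrr normr0.
rewrite !big_cons; case: ifP => // Pj.
have [/andP[x0 x1] /andP[y0 y1]] := xy01 j Pj.
set X := \prod_(_ <- _ | _) _; set Y := \prod_(_ <- _ | _) _.
have Y0 : 0 <= Y by apply: prodr_ge0 => k /xy01 [_ /andP[]].
have Y1 : Y <= 1 by apply: prodr_ile1 => k /xy01 [_ ->].
have -> : x j * X - y j * Y = x j * (X - Y) + (x j - y j) * Y by ring.
apply: le_trans (ler_normD _ _) _; rewrite !normrM addrC lerD //.
  by rewrite -[leRHS]mulr1 ler_wpM2l // ger0_norm.
by apply: le_trans IH; rewrite -[leRHS]mul1r ler_wpM2r // ger0_norm.
Qed.

(* Sums over a list only depend on the summand at the list's elements ([eq_big_seq]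
   for lists over a type without decidable equality). *)
Lemma eq_big_all (T : Type) (l : seq T) (Q : pred T) (F G : T -> R) :
  all Q l -> (forall t, Q t -> F t = G t) -> \sum_(t <- l) F t = \sum_(t <- l) G t.
Proof.
move=> Ql FG; elim: l Ql => [|t l IH] /=; first by rewrite !big_nil.
by case/andP=> Qt Ql; rewrite !big_cons FG // IH.
Qed.

Lemma sum_all_gt0 (T : Type) (l : seq T) (Q : pred T) (F : T -> R) :
  all Q l -> (0 < size l)%N -> (forall t, Q t -> 0 < F t) -> 0 < \sum_(t <- l) F t.
Proof.
move=> Ql l_gt0 F_gt0; elim: l Ql l_gt0 => [|t l IH] //= /andP[Qt Ql] _.
rewrite big_cons; case: l IH Ql => [|t' l] IH Ql; first by rewrite big_nil addr0 F_gt0.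
by rewrite ltr_wpDr ?ltW ?IH ?F_gt0.
Qed.

Lemma all_allpairs (S T U : Type) (PS : pred S) (PT : pred T) (PU : pred U)
    (f : S -> T -> U) (s : seq S) (t : seq T) :
  all PS s -> all PT t -> (forall x y, PS x -> PT y -> PU (f x y)) ->
  all PU [seq f x y | x <- s, y <- t].
Proof.
move=> Ss Tt fP; elim: s Ss => [|x s IH] //= /andP[Sx Ss].
by rewrite all_cat IH // andbT all_map; apply: sub_all Tt => y; exact: fP.
Qed.

End RealSums.

Section Distributions.
Context {R : rcfType} {n : nat} {A : 'I_n -> finType}.
Implicit Types (d : dist R n A) (f : Theta R A -> R).

Lemma dist_support_nonempty d : is_dist d -> (0 < size d.1)%N.
Proof.
case: d => [[|th L] w] [_ [_]] //=.
by rewrite big_nil => /eqP; rewrite eq_sym oner_eq0.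
Qed.

Lemma dist_mean_const d f c : is_dist d -> {in d.1, forall th, f th = c} ->
  \sum_(th <- d.1) d.2 th * f th = c.
Proof.
move=> [_ [_ w1]] fc; rewrite -[RHS]mul1r -w1 mulr_suml big_seq [RHS]big_seq.
by apply: eq_bigr => th /fc ->.
Qed.

Lemma dist_mean_gt d f c : is_dist d -> {in d.1, forall th, c < f th} ->
  c < \sum_(th <- d.1) d.2 th * f th.
Proof.
move=> dd fc; have [uq [w0 _]] := dd.
rewrite -subr_gt0 -{1}(dist_mean_const (f := fun=> c) dd (fun _ _ => erefl)) -sumrB.
have [th th_in] : exists th, th \in d.1.
  by case: d.1 (dist_support_nonempty dd) => [|th L] // _; exists th; rewrite inE eqxx.
rewrite (bigD1_seq th) //=.
have first_pos : 0 < d.2 th * f th - d.2 th * c by rewrite -mulrBr mulr_gt0 ?w0 ?subr_gt0 ?fc.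
suff : 0 <= \sum_(t <- d.1 | t != th) (d.2 t * f t - d.2 t * c) by lra.
rewrite big_seq_cond; apply: sumr_ge0 => t /andP[t_in _].
by rewrite -mulrBr mulr_ge0 // ?subr_ge0 ltW // ?w0 ?fc.
Qed.

Lemma dist_mean_lipschitz d f f' (eta : R) : is_dist d ->
  {in d.1, forall th, `|f th - f' th| <= eta} ->
  `|\sum_(th <- d.1) d.2 th * f th - \sum_(th <- d.1) d.2 th * f' th| <= eta.
Proof.
move=> dd close; have [_ [w0 _]] := dd.
rewrite -sumrB; apply: le_trans (ler_norm_sum _ _ _) _.
rewrite -(dist_mean_const (f := fun=> eta) dd (fun _ _ => erefl)).
rewrite big_seq [leRHS]big_seq; apply: ler_sum => th th_in.
have w_ge0 := ltW (w0 th th_in).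
by rewrite -mulrBr normrM ger0_norm // ler_wpM2l // close.
Qed.

Lemma entry_is_dist d th e :
  is_dist d -> th \notin d.1 -> 0 < e < 1 -> is_dist (entry d th e).
Proof.
move=> [uq [w0 w1]] fresh /andP[e0 e1]; split; first by rewrite /= fresh uq.
split=> [th'|] /=.
  rewrite inE; case: eqVneq => [_ _ //|_ /= th'_in].
  by rewrite mulr_gt0 ?subr_gt0 ?w0.
rewrite big_cons eqxx big_seq.
rewrite (eq_bigr (fun th' => (1 - e) * d.2 th')) => [|th' th'_in]; last first.
  by rewrite ifN //; apply: contraNneq fresh => <-.
by rewrite -big_seq -mulr_sumr w1; ring.
Qed.

End Distributions.

Section Payoffs.
Context {R : rcfType} {n : nat} {A : 'I_n -> finType}.

Lemma sum_prod_dep (D : forall j : 'I_n, A j -> R) :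
  \sum_(a : prof A) \prod_(j < n) D j (a j) = \prod_(j < n) \sum_(x : A j) D j x.
Proof.
pose P_ j := [ffun x : A j => D j x].
transitivity (\sum_(t : fprod A) \prod_(j in 'I_n) P_ j (t j)).
  rewrite (reindex (@fprod_of_dffun _ A)); last first.
    exists (@dffun_of_fprod _ A) => x _; [exact: fprod_of_dffunK|exact: dffun_of_fprodK].
  by apply: eq_bigr => a _; apply: eq_bigr => j _; rewrite /P_ ffunE fprodE.
rewrite big_fprod /=.
rewrite (eq_bigr (fun j => \sum_(x in tagged_with A j) untag 0 (P_ j) x)); last first.
  move=> j _; rewrite -(big_tag (fun j (x : A j) => P_ j x)) /=.
  by apply: eq_bigr => x _; rewrite /P_ ffunE.
by rewrite bigA_distr_big_dep.
Qed.

Definition pure_payoff (u : prof A -> R) (i : 'I_n) (y : mprof R A) (ai : A i) : R :=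
  \sum_(a : prof A | a i == ai) (\prod_(j < n | j != i) y j (a j)) * u a.
Arguments pure_payoff u i y ai : clear implicits.

Lemma ext_dev_pure u i si y :
  ext_dev u i si y = \sum_(ai : A i) si ai * pure_payoff u i y ai.
Proof.
rewrite /ext_dev (partition_big (fun a : prof A => a i) predT) //=.
apply: eq_bigr => ai _; rewrite /pure_payoff big_distrr.
by apply: eq_bigr => a /eqP <-; rewrite /= mulrA.
Qed.

Lemma ext_as_dev u (x : mprof R A) i : ext u x = ext_dev u i (x i) x.
Proof. by apply: eq_bigr => a _; rewrite (bigD1 i). Qed.

(* Against mixed opponents, a payoff depending on one's own action only, through [h],
   gives the pure action [ai] exactly [h ai]: the opponents' weights sum to one. *)
Lemma pure_payoff_own u i y ai (h : A i -> R) :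
  (forall j, j != i -> \sum_x y j x = 1) -> (forall a : prof A, u a = h (a i)) ->
  pure_payoff u i y ai = h ai.
Proof.
move=> y1 u_own; rewrite /pure_payoff.
rewrite (eq_bigr (fun a : prof A => h ai * \prod_(j < n | j != i) y j (a j))); last first.
  by move=> a /eqP ai_eq; rewrite u_own ai_eq mulrC.
rewrite -mulr_sumr -[RHS]mulr1; congr (_ * _).
pose D := @dfwith 'I_n (fun j => A j -> R) y i (fun x : A i => (x == ai)%:R).
transitivity (\sum_(a : prof A) \prod_(j < n) D j (a j)).
  rewrite big_mkcond; apply: eq_bigr => a _.
  rewrite [RHS](bigD1 i) //= /D dfwith_in.
  rewrite [X in _ = _ * X](eq_bigr (fun j => y j (a j))); last first.
    by move=> j ji; rewrite dfwith_out // eq_sym.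
  by case: (a i == ai); rewrite ?mul1r ?mul0r.
rewrite sum_prod_dep (bigD1 i) //= /D dfwith_in.
rewrite (bigD1 ai) //= eqxx big1 ?addr0; last by move=> x /negbTE ->.
rewrite mul1r big1 // => j ji; have ij : i != j by rewrite eq_sym.
by rewrite dfwith_out // y1.
Qed.

Lemma pure_payoff_lipschitz u i (y y' : mprof R A) ai (eta : R) : 0 <= eta ->
  (forall j, j != i -> forall x, 0 <= y j x <= 1 /\ 0 <= y' j x <= 1) ->
  (forall j, j != i -> forall x, `|y j x - y' j x| <= eta) ->
  `|pure_payoff u i y ai - pure_payoff u i y' ai| <= n%:R * eta * \sum_a `|u a|.
Proof.
move=> eta0 y01 close; rewrite /pure_payoff -sumrB.
apply: le_trans (ler_norm_sum _ _ _) _.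
rewrite mulr_sumr [leRHS](bigID (fun a : prof A => a i == ai)) /=.
rewrite -[leLHS]addr0; apply: lerD; last first.
  by apply: sumr_ge0 => a _; rewrite !mulr_ge0.
apply: ler_sum => a _; rewrite -mulrBl normrM ler_wpM2r //.
apply: le_trans (prod_unit_lipschitz (index_enum 'I_n) (P := fun j => j != i)
  (x := fun j => y j (a j)) (y := fun j => y' j (a j)) (fun j ji => y01 j ji (a j))) _.
apply: le_trans (_ : \sum_(j < n | j != i) eta <= _); first by apply: ler_sum => j /close.
apply: le_trans (_ : \sum_(j < n) eta <= _).
  by rewrite [leRHS](bigID (fun j : 'I_n => j != i)) /= lerDl sumr_ge0.
by rewrite sumr_const card_ord mulr_natl.
Qed.

Lemma pure_payoff_bound u i (y : mprof R A) ai :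
  (forall j, j != i -> forall x, 0 <= y j x <= 1) ->
  `|pure_payoff u i y ai| <= \sum_a `|u a|.
Proof.
move=> y01; rewrite /pure_payoff; apply: le_trans (ler_norm_sum _ _ _) _.
rewrite [leRHS](bigID (fun a : prof A => a i == ai)) /=.
rewrite -[leLHS]addr0; apply: lerD; last by apply: sumr_ge0.
apply: ler_sum => a _; rewrite normrM -[leRHS]mul1r ler_wpM2r //.
rewrite ger0_norm; first by apply: prodr_ile1 => j /y01 /(_ (a j)).
by apply: prodr_ge0 => j /y01 /(_ (a j)) /andP[].
Qed.

(* Without action profiles all pure-action payoffs vanish, so a strict gap between a
   mixture and a pure action forces an action profile to exist. *)
Lemma profiles_of_payoff_gap u i y (x : A i -> R) b :
  \sum_ai x ai * pure_payoff u i y ai < pure_payoff u i y b -> (0 < #|{: prof A}|)%N.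
Proof.
rewrite lt0n; apply: contraTneq => /card0_eq no_prof.
have zero ai : pure_payoff u i y ai = 0 by apply: big1 => a; move: (no_prof a); rewrite !inE.
by rewrite zero big1 ?ltxx // => ai _; rewrite zero mulr0.
Qed.

Lemma dist_mean_mixed i (d : dist R n A) (f : Theta R A -> A i -> R) :
  is_dist d -> {in d.1, forall th, mixed i (f th)} ->
  mixed i (fun a => \sum_(th <- d.1) d.2 th * f th a).
Proof.
move=> [_ [w0 w1]] f_mixed; split=> [a|].
  rewrite big_seq; apply: sumr_ge0 => th th_in.
  by rewrite mulr_ge0 ?(ltW (w0 _ th_in)) //; case: (f_mixed _ th_in).
rewrite exchange_big /= -w1 big_seq [RHS]big_seq; apply: eq_bigr => th th_in.
by rewrite -mulr_sumr; case: (f_mixed _ th_in) => _ ->; rewrite mulr1.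
Qed.

End Payoffs.
Arguments pure_payoff {R n A} u i y ai.

Section Populations.
Context {R : rcfType} {n : nat} {A : 'I_n -> finType}.
Implicit Types (mu : pop R A) (s st : strat R A).

Lemma prof_list_supp mu P :
  all (fun t : 'I_n -> Theta R A => all (fun j => t j \in (mu j).1) P) (prof_list mu P).
Proof.
elim: P => [|j P IH] //=.
apply: (all_allpairs (PS := fun th => th \in (mu j).1) _ IH) => [|th t th_in t_supp].
  exact/allP.
rewrite /= eqxx th_in; apply/allP => k kP.
by case: ifP => [/eqP -> //|_]; exact: (allP t_supp).
Qed.

Lemma prof_list_nonempty mu P : is_pop mu -> (0 < size (prof_list mu P))%N.
Proof.
move=> Hpop; elim: P => [|j P IH] //=.
by rewrite size_allpairs muln_gt0 IH dist_support_nonempty.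
Qed.

Lemma profiles_except_supp mu i :
  all (fun t => [forall (j | j != i), t j \in (mu j).1]) (profiles_except mu i).
Proof.
apply: sub_all (prof_list_supp mu _) => t /allP t_supp.
by apply/forall_inP => j ji; apply: t_supp; rewrite mem_filter ji mem_enum.
Qed.

Definition opp_weight mu (i : 'I_n) : R :=
  \sum_(t <- profiles_except mu i) \prod_(j < n | j != i) (mu j).2 (t j).

Lemma opp_weight_gt0 mu i : is_pop mu -> 0 < opp_weight mu i.
Proof.
move=> Hpop; apply: sum_all_gt0 (profiles_except_supp mu i) _ _.
  exact: prof_list_nonempty.
move=> t /forall_inP t_supp; apply: prodr_gt0 => j ji.
by have [_ [w0 _]] := Hpop j; apply/w0/t_supp.
Qed.

Definition dominant_type (i : 'I_n) (c : R) (b : A i) : Theta R A :=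
  [ffun a : prof A => c + (a i == b)%:R].
Arguments dominant_type i c b : clear implicits.

(* A large enough constant [c] makes the dominant type differ from all types in [L]. *)
Lemma dominant_type_fresh (L : seq (Theta R A)) i b (a0 : prof A) :
  dominant_type i (1 + \sum_(th <- L) `|th a0|) b \notin L.
Proof.
apply/negP => th_in; set th := dominant_type _ _ _ in th_in.
have le_sum : `|th a0| <= \sum_(th' <- L) `|th' a0|.
  by rewrite (big_rem _ th_in) /= lerDl sumr_ge0.
have := ler_norm (th a0); move: le_sum; rewrite /th ffunE.
by case: (a0 i == b) => /=; lra.
Qed.

Lemma ext_dev_dominant_type i c b si (y : mprof R A) :
  (forall j, j != i -> \sum_x y j x = 1) -> mixed i si ->
  ext_dev (dominant_type i c b) i si y = c + si b.
Proof.
move=> y1 [_ si1]; rewrite ext_dev_pure.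
rewrite (eq_bigr (fun ai => si ai * c + si ai * (ai == b)%:R)) => [|ai _]; last first.
  rewrite (pure_payoff_own (h := fun ai => c + (ai == b)%:R) _ y1) ?mulrDr // => a.
  by rewrite ffunE.
rewrite big_split /= -mulr_suml si1 mul1r (bigD1 b) //= eqxx mulr1 big1 ?addr0 //.
by move=> ai /negbTE ->; rewrite mulr0.
Qed.

Lemma EU_dominant_type mu s i c b si : BNE mu s -> mixed i si ->
  EU mu s i (dominant_type i c b) si = opp_weight mu i * (c + si b).
Proof.
move=> Hbne si_mixed; rewrite /EU /opp_weight mulr_suml.
apply: eq_big_all (profiles_except_supp mu i) _ => t /forall_inP t_supp.
rewrite ext_dev_dominant_type // => j ji.
by have [[_ ->]] := Hbne j _ (t_supp j ji).
Qed.

Lemma dominant_type_best_reply mu s i c b : is_pop mu -> BNE mu s ->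
  dominant_type i c b \in (mu i).1 ->
  forall ai, s i (dominant_type i c b) ai = (ai == b)%:R.
Proof.
move=> Hpop Hbne th_in; have [s_mixed best] := Hbne i _ th_in; have [s0 s1] := s_mixed.
pose pure_b (ai : A i) : R := (ai == b)%:R.
have pure_b_mixed : mixed i pure_b.
  split=> [ai|]; first exact: ler0n.
  by rewrite (bigD1 b) //= /pure_b eqxx big1 ?addr0 // => ai /negbTE ->.
have := best pure_b pure_b_mixed.
rewrite !(EU_dominant_type c b Hbne) // ler_pM2l ?opp_weight_gt0 // lerD2l /pure_b eqxx.
exact: prob_point_mass s0 s1.
Qed.

Lemma postentry_is_pop mu (J : {set 'I_n}) tht (eps : 'I_n -> R) : is_pop mu ->
  (forall j, j \in J -> tht j \notin (mu j).1) -> (forall j, j \in J -> 0 < eps j < 1) ->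
  is_pop (postentry mu J tht eps).
Proof.
move=> Hpop fresh eps01 j; rewrite /postentry; case: ifP => jJ; last exact: Hpop.
exact: entry_is_dist (Hpop j) (fresh j jJ) (eps01 j jJ).
Qed.

Definition mutant_entry mu (i : 'I_n) (th : Theta R A) (e : R) : pop R A :=
  postentry mu [set i] (fun=> th) (fun=> e).

Lemma mutant_entry_other mu i th e j : j != i -> mutant_entry mu i th e j = mu j.
Proof. by move=> ji; rewrite /mutant_entry /postentry in_set1 (negbTE ji). Qed.

Lemma mutant_entry_supp mu i th e : (mutant_entry mu i th e i).1 = th :: (mu i).1.
Proof. by rewrite /mutant_entry /postentry in_set1 eqxx. Qed.

Lemma mutant_entry_is_pop mu i th e :
  is_pop mu -> th \notin (mu i).1 -> 0 < e < 1 -> is_pop (mutant_entry mu i th e).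
Proof. by move=> Hpop fresh e01; apply: postentry_is_pop => // j /set1P ->. Qed.

Lemma nearby_coord mut mu s (eta : R) st j th a : is_pop mu -> nearby mut mu s eta st ->
  th \in (mu j).1 -> `|st j th a - s j th a| <= eta.
Proof.
move=> Hpop [_ near] th_in.
pose t k := if k == j then th else nth theta0 (mu k).1 0.
have t_supp k : t k \in (mu k).1.
  by rewrite /t; case: eqP => [->//|_]; rewrite mem_nth ?dist_support_nonempty.
have := near t t_supp j; rewrite /t eqxx /enorm; apply: le_trans.
rewrite -sqrtr_sqr; apply: ler_wsqrtr; rewrite (bigD1 a) //= lerDl.
by apply: sumr_ge0 => a' _; exact: sqr_ge0.
Qed.

End Populations.
Arguments dominant_type {R n A} i c b.

Section Fitness.
Context {R : rcfType} {n : nat} {A : 'I_n -> finType}.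
Variable pi : 'I_n -> prof A -> R.
Implicit Types (mu : pop R A) (s st : strat R A).

Lemma stable_single_mutant mu s i th (eta : R) :
  stable pi mu s -> th \notin (mu i).1 -> 0 < eta ->
  exists etab e st, [/\ 0 <= etab < eta, 0 < e < 1,
    nearby (mutant_entry mu i th e) mu s etab st &
    {in (mu i).1, forall th',
       fitness pi (mutant_entry mu i th e) st i th
         < fitness pi (mutant_entry mu i th e) st i th'}
    \/ balanced pi (mutant_entry mu i th e) st].
Proof.
move=> [_ Hstab] fresh eta0.
have i_set : [set i] != set0 by apply/set0Pn; exists i; rewrite in_set1.
have fresh_set j : j \in [set i] -> th \notin (mu j).1 by move=> /set1P ->.
have [etab [epsb [etab_bd [/andP[epsb0 epsb1] post_entry]]]] :=
  Hstab [set i] i_set (fun=> th) fresh_set eta eta0.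
pose e := epsb / 2.
have e01 : 0 < e < 1 by apply/andP; split; rewrite /e; lra.
have e_norm : 0 < epsnorm [set i] (fun=> e) < epsb.
  rewrite /epsnorm big_set1E (max_idPl (ltW (andP e01).1)); apply/andP; split; rewrite /e; lra.
have [[st near] alternative] := post_entry (fun=> e) (fun _ _ => e01) e_norm.
exists etab, e, st; split=> //.
by case: (alternative st near) => [[j /set1P -> worse]|bal]; [left|right].
Qed.

Lemma incumbent_mean_fitness mu mu' st i :
  \sum_(th <- (mu i).1) (mu i).2 th * fitness pi mu' st i th =
  \sum_ai agg mu st i ai * pure_payoff (pi i) i (agg mu' st) ai.
Proof.
under eq_bigr do rewrite /fitness ext_dev_pure mulr_sumr.
rewrite exchange_big; apply: eq_bigr => ai _; rewrite /agg mulr_suml.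
by apply: eq_bigr => th _; rewrite mulrA.
Qed.

Lemma fitness_pure mu st i th (b : A i) : (forall ai, st i th ai = (ai == b)%:R) ->
  fitness pi mu st i th = pure_payoff (pi i) i (agg mu st) b.
Proof.
move=> pure; rewrite /fitness ext_dev_pure (bigD1 b) //= pure eqxx mul1r big1 ?addr0 //.
by move=> ai /negbTE ai_b; rewrite pure ai_b mul0r.
Qed.

Lemma agg_mixed mu s j : is_pop mu -> BNE mu s -> mixed j (agg mu s j).
Proof. by move=> Hpop Hbne; apply: dist_mean_mixed (Hpop j) _ => th /(Hbne j) []. Qed.

End Fitness.

Section Invasion.
Context {R : rcfType} {n : nat} {A : 'I_n -> finType}.
Variables (pi : 'I_n -> prof A -> R) (mu : pop R A) (s : strat R A).
Hypotheses (Hpop : is_pop mu) (Hbne : BNE mu s).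
Variables (i : 'I_n) (b : A i) (c e eta : R) (st : strat R A).
Let mutant := dominant_type i c b.
Let mut := mutant_entry mu i mutant e.
Hypotheses (fresh : mutant \notin (mu i).1) (e01 : 0 < e < 1)
  (near : nearby mut mu s eta st).

Lemma invasion_gap :
  (2 * n%:R + #|A i|%:R) * eta * \sum_a `|pi i a| <
    pure_payoff (pi i) i (agg mu s) b
    - \sum_ai agg mu s i ai * pure_payoff (pi i) i (agg mu s) ai ->
  \sum_(th <- (mu i).1) (mu i).2 th * fitness pi mut st i th < fitness pi mut st i mutant.
Proof.
set C := \sum_a _; set x := agg mu s; set xt := agg mut st; move=> gap.
have mut_pop : is_pop mut by apply: mutant_entry_is_pop.
have [bne_st _] := near.
have mutant_in : mutant \in (mut i).1 by rewrite /mut mutant_entry_supp mem_head.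
have close_other j a : j != i -> `|x j a - xt j a| <= eta.
  move=> ji; rewrite /xt /agg /mut mutant_entry_other //.
  apply: dist_mean_lipschitz (Hpop j) _ => th th_in.
  by rewrite distrC; apply: nearby_coord Hpop near th_in.
have close_i a : `|agg mu st i a - x i a| <= eta.
  by apply: dist_mean_lipschitz (Hpop i) _ => th th_in; apply: nearby_coord Hpop near th_in.
have eta0 : 0 <= eta by apply: le_trans (close_i b).
have x01 j a : 0 <= x j a <= 1.
  by have [x0 x1] := agg_mixed j Hpop Hbne; apply: prob_coord_bounds.
have xt01 j a : 0 <= xt j a <= 1.
  by have [xt0 xt1] := agg_mixed j mut_pop bne_st; apply: prob_coord_bounds.
have lip a : `|pure_payoff (pi i) i x a - pure_payoff (pi i) i xt a| <= n%:R * eta * C.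
  apply: (pure_payoff_lipschitz (pi i) a eta0) => j ji a'; first by rewrite x01 xt01.
  exact: close_other.
have bound a : `|pure_payoff (pi i) i xt a| <= C.
  by apply: pure_payoff_bound => j _ a'; apply: xt01.
have plays_b := dominant_type_best_reply mut_pop bne_st mutant_in.
rewrite incumbent_mean_fitness (fitness_pure pi mut plays_b).
have [x0 x1] := agg_mixed i Hpop Hbne.
have := expected_payoff_perturb x0 x1 close_i bound lip.
(* The mutant earns at least g(b) - n eta C, the incumbents at most v + (#|A i| + n) eta C. *)
have := ler_norm (pure_payoff (pi i) i x b - pure_payoff (pi i) i xt b); have := lip b.
move: gap; rewrite -/x; nra.
Qed.

End Invasion.

Theorem mainTheorem10 (R : rcfType) (n : nat) (A : 'I_n -> finType)
  (pi : 'I_n -> prof A -> R) (mu : pop R A) (s : strat R A) :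
  is_pop mu -> BNE mu s -> stable pi mu s -> nash pi (agg mu s).
Proof.
move=> Hpop Hbne Hstable; split=> [j|i si [si0 si1]]; first exact: agg_mixed.
rewrite leNgt (ext_as_dev _ _ i) !ext_dev_pure; apply/negP => better.
set g := pure_payoff (pi i) i (agg mu s) in better *.
set v := \sum_ai agg mu s i ai * g ai in better.
have [b v_lt] := mixture_gt_pure si0 si1 better.
have /card_gt0P [a0 _] := profiles_of_payoff_gap v_lt.
have fresh := dominant_type_fresh (mu i).1 b a0; set mutant := dominant_type _ _ _ in fresh.
pose K := (2 * n%:R + #|A i|%:R) * \sum_a `|pi i a| + 1.
have K_gt0 : 0 < K by rewrite ltr_pwDr // mulr_ge0 ?addr_ge0 ?mulr_ge0 ?sumr_ge0.
have eta_gt0 : 0 < (g b - v) / K by rewrite divr_gt0 ?subr_gt0.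
have [etab [e [st [/andP[etab0 etab_lt] e01 near alternative]]]] :=
  stable_single_mutant Hstable fresh eta_gt0.
have gap : (2 * n%:R + #|A i|%:R) * etab * \sum_a `|pi i a| < g b - v.
  by move: etab_lt; rewrite ltr_pdivlMr // /K; nra.
have := invasion_gap Hpop Hbne fresh e01 near gap.
set mut := mutant_entry _ _ _ _ in alternative *.
case: alternative => [mutant_worse|post_balanced] mean_lt.
  by have := lt_trans mean_lt (dist_mean_gt (Hpop i) mutant_worse); rewrite ltxx.
have same_fitness :
    {in (mu i).1, forall th, fitness pi mut st i th = fitness pi mut st i mutant}.
  by move=> th th_in; apply: post_balanced; rewrite mutant_entry_supp inE ?th_in ?eqxx ?orbT.
by move: mean_lt; rewrite (dist_mean_const (Hpop i) same_fitness) ltxx.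
Qed.
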